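(* Let $R\in\{\mathrm{ML},\mathrm{wML},\mathrm{C},\mathrm{S}\}$ and let $[p,q]\in\mathscr I$ with $p<q$. Then there is a precise forecasting system $\varphi$ with $\varphi(s)\subseteq[p,q]$ for all $s\in\mathbb S$ such that any path $\omega\in\Omega$ is $R$-random for $\varphi$ if and only if it is $R$-random for $[p,q]$.
   Context: Notation: $\mathbb N=\{1,2,\dots\}$, $\mathbb N_0=\mathbb N\cup\{0\}$. $\Omega=\{0,1\}^{\mathbb N}$ is the set of paths $\omega=(\omega_1,\omega_2,\dots)$; $\omega_{1:n}=(\omega_1,\dots,\omega_n)$, $\omega_{1:0}=\square$ (empty sequence). $\mathbb S=\bigcup_{n\in\mathbb N_0}\{0,1\}^n$ is the set of situations, $|s|$ the length, $sx$ concatenation. $\mathscr I$ is the set of closed intervals $I\subseteq[0,1]$ (singletons identified with numbers). For $r\in[0,1]$ and $f:\{0,1\}\to\mathbb R$, $E_r(f)=rf(1)+(1-r)f(0)$; for $I\in\mathscr I$, $\overline E_I(f)=\max_{r\in I}E_r(f)$. A forecasting system is a map $\varphi:\mathbb S\to\mathscr I$; it is precise if every $\varphi(s)$ is a singleton; a stationary (constant) forecasting system with value $I$ is identified with $I$. A real process is $F:\mathbb S\to\mathbb R$; $\Delta F(s)$ is the function $x\mapsto F(sx)-F(s)$. $M$ is a supermartingale for $\varphi$ if $\overline E_{\varphi(s)}(\Delta M(s))\le0$ for all $s$. A test process is a non-negative real process with $F(\square)=1$; a test supermartingale for $\varphi$ is a test process that is a supermartingale for $\varphi$. A multiplier process $D$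 assigns to each $s$ a function $D(s):\{0,1\}\to[0,\infty)$ and generates the test process $F(\square)=1$, $F(sx)=F(s)D(s)(x)$. Computability: maps from countable effectively encoded domains to $\mathbb N_0$ or $\mathbb Q$ are recursive if Turing-computable; a real map $r$ on such a domain $\mathscr D$ is lower semicomputable if $r(d)=\lim_n q(d,n)$ for a recursive rational $q$ non-decreasing in $n$, and computable if $|r(d)-q(d,n)|<2^{-n}$ for some recursive rational $q$. $\mathscr F_{\mathrm{ML}}$: lower semicomputable test processes; $\mathscr F_{\mathrm{wML}}$: test processes generated by lower semicomputable multiplier processes; $\mathscr F_{\mathrm C}=\mathscr F_{\mathrm S}$: positive rational-valued recursive test processes. $\overline{\mathbb T}_R(\varphi)$ is the set of elements of $\mathscr F_R$ that are test supermartingales for $\varphi$. For $R\in\{\mathrm{ML},\mathrm{wML},\mathrm C\}$, $\omega$ is $R$-random for $\varphi$ if no $T\in\overline{\mathbb T}_R(\varphi)$ has $\limsup_nT(\omega_{1:n})=\infty$. A real growth function is a computable, non-decreasing, unbounded $\tau:\mathbb N_0\to[0,\infty)$; $\omega$ is S-random for $\varphi$ if there are no $T\in\overline{\mathbb T}_{\mathrm S}(\varphi)$ and real growth function $\tau$ with $\limsup_n[T(\omega_{1:n})-\tau(n)]\ge0$. $R$-random for an interval $I$ means $R$-random for the stationary forecasting system with value $I$. *)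

From Stdlib Require Import Reals List Lra Arith.
Import ListNotations.

Inductive rec : Type :=
| RZero
| RSucc
| RProj (i : nat)
| RComp (f : rec) (gs : list rec)
| RPrimRec (f g : rec)
| RMu (f : rec).

Inductive eval : rec -> list nat -> nat -> Prop :=
| ev_zero xs : eval RZero xs 0
| ev_succ x xs : eval RSucc (x :: xs) (S x)
| ev_proj i xs : eval (RProj i) xs (nth i xs 0)
| ev_comp f gs xs ys y : evals gs xs ys -> eval f ys y -> eval (RComp f gs) xs y
| ev_pr0 f g xs y : eval f xs y -> eval (RPrimRec f g) (0 :: xs) y
| ev_prS f g n xs z y :
    eval (RPrimRec f g) (n :: xs) z -> eval g (n :: z :: xs) y ->
    eval (RPrimRec f g) (S n :: xs) y
| ev_mu f xs y :
    eval f (y :: xs) 0 ->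
    (forall k, (k < y)%nat -> exists m, m <> 0 /\ eval f (k :: xs) m) ->
    eval (RMu f) xs y
with evals : list rec -> list nat -> list nat -> Prop :=
| evs_nil xs : evals nil xs nil
| evs_cons g gs xs y ys : eval g xs y -> evals gs xs ys -> evals (g :: gs) xs (y :: ys).

Definition situation := list bool.

(* effective (injective, computable) encoding of situations into nat *)
Fixpoint code (s : situation) : nat :=
  match s with
  | nil => 0
  | b :: t => 2 * code t + (if b then 2 else 1)
  end.

Definition enc_sit (s : situation) : list nat := [code s].
Definition enc_sitx (p : situation * bool) : list nat :=
  [code (fst p); if snd p then 1 else 0].
Definition enc_nat (n : nat) : list nat := [n].

Definition prefix (omega : nat -> bool) (n : nat) : situation := map omega (seq 0 n).

Open Scope R_scope.

(* A rational-valued map on an effectively encoded domain is recursive: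
   value (a - b)/(c + 1) with a, b, c computed by total recursive programs. *)
Definition rec_rat {D : Type} (enc : D -> list nat) (r : D -> R) : Prop :=
  exists ca cb cc : rec, forall d, exists a b c : nat,
    eval ca (enc d) a /\ eval cb (enc d) b /\ eval cc (enc d) c /\
    r d = (INR a - INR b) / (INR c + 1).

Definition enc_pair {D : Type} (enc : D -> list nat) (dn : D * nat) : list nat :=
  enc (fst dn) ++ [snd dn].

Definition lower_semicomputable {D : Type} (enc : D -> list nat) (r : D -> R) : Prop :=
  exists q : D -> nat -> R,
    rec_rat (enc_pair enc) (fun dn => q (fst dn) (snd dn)) /\
    (forall d n, q d n <= q d (S n)) /\
    (forall d, Un_cv (q d) (r d)).

Definition computable_real {D : Type} (enc : D -> list nat) (r : D -> R) : Prop :=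
  exists q : D -> nat -> R,
    rec_rat (enc_pair enc) (fun dn => q (fst dn) (snd dn)) /\
    (forall d n, Rabs (r d - q d n) < / 2 ^ n).

(* a closed interval [lo, hi] is represented by the pair (lo, hi) *)
Definition forecasting_system := situation -> R * R.

Definition precise_fs (phi : situation -> R) : forecasting_system :=
  fun s => (phi s, phi s).
Definition stationary_fs (p q : R) : forecasting_system := fun _ => (p, q).

Definition process := situation -> R.

Definition Ex (r : R) (f : bool -> R) : R := r * f true + (1 - r) * f false.

Definition Delta (F : process) (s : situation) : bool -> R :=
  fun x => F (s ++ [x]) - F s.

Definition supermartingale (phi : forecasting_system) (M : process) : Prop :=
  forall s r, fst (phi s) <= r <= snd (phi s) -> Ex r (Delta M s) <= 0.

Definition test_process (F : process) : Prop :=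
  (forall s, 0 <= F s) /\ F nil = 1.

Definition multiplier_process (D : situation -> bool -> R) : Prop :=
  forall s x, 0 <= D s x.

Definition generated_by (D : situation -> bool -> R) (F : process) : Prop :=
  F nil = 1 /\ forall s x, F (s ++ [x]) = F s * D s x.

Definition F_ML (F : process) : Prop :=
  test_process F /\ lower_semicomputable enc_sit F.

Definition F_wML (F : process) : Prop :=
  test_process F /\
  exists D, multiplier_process D /\
    lower_semicomputable enc_sitx (fun p => D (fst p) (snd p)) /\
    generated_by D F.

(* F_C = F_S : positive rational-valued recursive test processes *)
Definition F_C (F : process) : Prop :=
  test_process F /\ (forall s, 0 < F s) /\ rec_rat enc_sit F.

Definition limsup_infinite (T : process) (omega : nat -> bool) : Prop :=
  forall B, exists n, B < T (prefix omega n).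

Definition real_growth_function (tau : nat -> R) : Prop :=
  computable_real enc_nat tau /\ (forall n, 0 <= tau n) /\
  (forall n, tau n <= tau (S n)) /\ (forall B, exists n, B < tau n).

Definition limsup_ge0 (T : process) (tau : nat -> R) (omega : nat -> bool) : Prop :=
  forall eps, 0 < eps -> forall N, exists n, (N <= n)%nat /\
    - eps < T (prefix omega n) - tau n.

Inductive rkind := RK_ML | RK_wML | RK_C | RK_S.

Definition random (k : rkind) (phi : forecasting_system) (omega : nat -> bool) : Prop :=
  match k with
  | RK_ML => ~ exists T, F_ML T /\ supermartingale phi T /\ limsup_infinite T omega
  | RK_wML => ~ exists T, F_wML T /\ supermartingale phi T /\ limsup_infinite T omega
  | RK_C => ~ exists T, F_C T /\ supermartingale phi T /\ limsup_infinite T omega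
  | RK_S => ~ exists T tau, F_C T /\ supermartingale phi T /\
              real_growth_function tau /\ limsup_ge0 T tau omega
  end.

From Pilot Require Import Defs.
From Stdlib Require Import Reals List.
Open Scope R_scope.

From Stdlib Require Import Lra Lia Arith Cantor ClassicalEpsilon FunctionalExtensionality.
Import ListNotations.

(* Diagonalisation. Each test process of the class is described by a triple of programs, so
   the candidate tests can be indexed by natural numbers. The precise forecast is built in
   stages: at stage i, if the i-th test is still expected to gain, under the endpoint forecast
   p or q, at some situation s longer than every earlier target, the forecast at s is set to
   that endpoint, so the i-th test is not a supermartingale for it. Hence a test supermartingale
   for the precise forecast is a supermartingale for [p, q] on all sufficiently long
   situations; rescaling it by a constant on the cone of a long prefix of omega, and freezing
   it at 1 elsewhere, gives a test supermartingale for [p, q] of the same class that still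
   succeeds on omega. Conversely, the forecast lies in [p, q], so every supermartingale for
   [p, q] is one for the forecast. *)

(** * Recursive programs *)

Section Programs.
Local Open Scope nat_scope.

Definition pcomp1 (f g : rec) : rec := RComp f [g].
Definition pcomp2 (f g1 g2 : rec) : rec := RComp f [g1; g2].

Lemma eval_pcomp1 f g xs a y : eval g xs a -> eval f [a] y -> eval (pcomp1 f g) xs y.
Proof. intros Hg Hf. apply (ev_comp _ _ _ [a]); [repeat constructor |]; assumption. Qed.

Lemma eval_pcomp2 f g1 g2 xs a b y :
  eval g1 xs a -> eval g2 xs b -> eval f [a; b] y -> eval (pcomp2 f g1 g2) xs y.
Proof. intros Hg1 Hg2 Hf. apply (ev_comp _ _ _ [a; b]); [repeat constructor |]; assumption. Qed.

Lemma eval_proj_nth i xs y : nth i xs 0 = y -> eval (RProj i) xs y.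
Proof. intros <-. constructor. Qed.

Fixpoint pconst (k : nat) : rec :=
  match k with 0 => RZero | S k => pcomp1 RSucc (pconst k) end.

Lemma eval_pconst k xs : eval (pconst k) xs k.
Proof.
  induction k as [|k IH]; [constructor |].
  apply (eval_pcomp1 _ _ _ k); [exact IH | constructor].
Qed.

Definition add_rec : rec := RPrimRec (RProj 0) (pcomp1 RSucc (RProj 1)).

Lemma eval_add_rec x y : eval add_rec [x; y] (x + y).
Proof.
  induction x as [|x IH]; [apply ev_pr0, eval_proj_nth; reflexivity |].
  apply (ev_prS _ _ _ _ _ _ IH), (eval_pcomp1 _ _ _ (x + y)).
  - apply eval_proj_nth; reflexivity.
  - constructor.
Qed.

Definition padd (g1 g2 : rec) : rec := pcomp2 add_rec g1 g2.

Lemma eval_padd g1 g2 xs a b : eval g1 xs a -> eval g2 xs b -> eval (padd g1 g2) xs (a + b).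
Proof. intros; eapply eval_pcomp2; eauto using eval_add_rec. Qed.

Definition mul_rec : rec := RPrimRec RZero (padd (RProj 2) (RProj 1)).

Lemma eval_mul_rec x y : eval mul_rec [x; y] (x * y).
Proof.
  induction x as [|x IH]; [apply ev_pr0; constructor |].
  apply (ev_prS _ _ _ _ _ _ IH), eval_padd; apply eval_proj_nth; reflexivity.
Qed.

Definition pmul (g1 g2 : rec) : rec := pcomp2 mul_rec g1 g2.

Lemma eval_pmul g1 g2 xs a b : eval g1 xs a -> eval g2 xs b -> eval (pmul g1 g2) xs (a * b).
Proof. intros; eapply eval_pcomp2; eauto using eval_mul_rec. Qed.

Definition pred_rec : rec := RPrimRec RZero (RProj 0).

Lemma eval_pred_rec x : eval pred_rec [x] (pred x).
Proof.
  induction x as [|x IH]; [apply ev_pr0; constructor |].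
  apply (ev_prS _ _ _ _ _ _ IH), eval_proj_nth; reflexivity.
Qed.

(* Recursion runs over the first argument, so this computes [x - y] from [[y; x]]. *)
Definition monus_flip_rec : rec := RPrimRec (RProj 0) (pcomp1 pred_rec (RProj 1)).

Lemma eval_monus_flip_rec y x : eval monus_flip_rec [y; x] (x - y).
Proof.
  induction y as [|y IH].
  - apply ev_pr0, eval_proj_nth; simpl; lia.
  - apply (ev_prS _ _ _ _ _ _ IH), (eval_pcomp1 _ _ _ (x - y)).
    + apply eval_proj_nth; reflexivity.
    + replace (x - S y) with (pred (x - y)) by lia. apply eval_pred_rec.
Qed.

Definition pmonus (g1 g2 : rec) : rec := pcomp2 monus_flip_rec g2 g1.

Lemma eval_pmonus g1 g2 xs a b : eval g1 xs a -> eval g2 xs b -> eval (pmonus g1 g2) xs (a - b).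
Proof. intros; eapply eval_pcomp2; eauto using eval_monus_flip_rec. Qed.

Definition psg (g : rec) : rec := pmonus (pconst 1) (pmonus (pconst 1) g).

Lemma eval_psg g xs a : eval g xs a -> eval (psg g) xs (Nat.min a 1).
Proof.
  intros Hg. replace (Nat.min a 1) with (1 - (1 - a)) by lia.
  repeat apply eval_pmonus; auto using eval_pconst.
Qed.

Lemma mod_succ m D : 1 <= D -> S m mod D = S (m mod D) * Nat.min (D - S (m mod D)) 1.
Proof.
  intros HD. pose proof (Nat.div_mod m D ltac:(lia)) as Hm.
  pose proof (Nat.mod_upper_bound m D ltac:(lia)) as Hr.
  set (r := m mod D) in *. set (k := m / D) in *.
  destruct (Nat.lt_ge_cases (S r) D) as [Hlt | Hge].
  - rewrite <- (Nat.mod_unique (S m) D k (S r)) by lia.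
    replace (Nat.min (D - S r) 1) with 1 by lia. lia.
  - rewrite <- (Nat.mod_unique (S m) D (S k) 0) by lia.
    replace (Nat.min (D - S r) 1) with 0 by lia. lia.
Qed.

Definition pmod (D : nat) : rec :=
  RPrimRec RZero (pmul (pcomp1 RSucc (RProj 1)) (psg (pmonus (pconst D) (pcomp1 RSucc (RProj 1))))).

Lemma eval_pmod D m : 1 <= D -> eval (pmod D) [m] (m mod D).
Proof.
  intros HD. induction m as [|m IH]; [rewrite Nat.Div0.mod_0_l; apply ev_pr0; constructor |].
  assert (Hsucc : eval (pcomp1 RSucc (RProj 1)) [m; m mod D] (S (m mod D))).
  { apply (eval_pcomp1 _ _ _ (m mod D)); [apply eval_proj_nth; reflexivity | constructor]. }
  apply (ev_prS _ _ _ _ _ _ IH). rewrite mod_succ by exact HD.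
  apply eval_pmul, eval_psg, eval_pmonus; auto using eval_pconst.
Qed.

Definition divides_shiftb (c0 D m : nat) : bool := (c0 <=? m) && ((m - c0) mod D =? 0).

Definition pdivides_shift (c0 D : nat) : rec :=
  pmul (psg (pmonus (pcomp1 RSucc (RProj 0)) (pconst c0)))
       (pmonus (pconst 1) (pcomp1 (pmod D) (pmonus (RProj 0) (pconst c0)))).

Lemma eval_pdivides_shift c0 D xs m : 1 <= D -> nth 0 xs 0 = m ->
  eval (pdivides_shift c0 D) xs (if divides_shiftb c0 D m then 1 else 0).
Proof.
  intros HD Hm.
  replace (if divides_shiftb c0 D m then 1 else 0)
    with (Nat.min (S m - c0) 1 * (1 - (m - c0) mod D)).
  - apply eval_pmul; [apply eval_psg, eval_pmonus | apply eval_pmonus].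
    + apply (eval_pcomp1 _ _ _ m); [apply eval_proj_nth; exact Hm | constructor].
    + apply eval_pconst.
    + apply eval_pconst.
    + apply (eval_pcomp1 _ _ _ (m - c0)); [| apply eval_pmod; exact HD].
      apply eval_pmonus; [apply eval_proj_nth; exact Hm | apply eval_pconst].
  - unfold divides_shiftb.
    destruct (Nat.leb_spec c0 m), (Nat.eqb_spec ((m - c0) mod D) 0) as [E | E]; cbn [andb].
    + rewrite E. lia.
    + replace (1 - (m - c0) mod D) with 0 by lia. lia.
    + replace (Nat.min (S m - c0) 1) with 0 by lia. lia.
    + replace (Nat.min (S m - c0) 1) with 0 by lia. lia.
Qed.

Fixpoint rec_ind_nested (P : rec -> Prop)
  (HZ : P RZero) (HS : P RSucc) (HP : forall i, P (RProj i))
  (HC : forall f gs, P f -> Forall P gs -> P (RComp f gs))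
  (HR : forall f g, P f -> P g -> P (RPrimRec f g))
  (HM : forall f, P f -> P (RMu f)) (r : rec) {struct r} : P r :=
  let IH := rec_ind_nested P HZ HS HP HC HR HM in
  match r with
  | RZero => HZ
  | RSucc => HS
  | RProj i => HP i
  | RComp f gs =>
      HC f gs (IH f)
        ((fix IHs (l : list rec) : Forall P l :=
            match l with
            | nil => Forall_nil P
            | g :: l' => Forall_cons g (IH g) (IHs l')
            end) gs)
  | RPrimRec f g => HR f g (IH f) (IH g)
  | RMu f => HM f (IH f)
  end.

Lemma eval_deterministic c xs y1 y2 : eval c xs y1 -> eval c xs y2 -> y1 = y2.
Proof.
  revert xs y1 y2.
  induction c as [| | i | f gs Hf Hgs | f g Hf Hg | f Hf] using rec_ind_nested;
    intros xs y1 y2 H1 H2.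
  - inversion H1; inversion H2; subst; reflexivity.
  - inversion H1; inversion H2; subst; congruence.
  - inversion H1; inversion H2; subst; reflexivity.
  - inversion H1 as [| | | ? ? ? ys1 ? Hys1 Hf1 | | |]; subst.
    inversion H2 as [| | | ? ? ? ys2 ? Hys2 Hf2 | | |]; subst.
    enough (ys1 = ys2) by (subst; eapply Hf; eauto).
    clear Hf1 Hf2 H1 H2. revert ys1 ys2 Hys1 Hys2.
    induction Hgs as [| g gs Hg _ IHgs]; intros ys1 ys2 Hys1 Hys2;
      inversion Hys1; inversion Hys2; subst; [reflexivity |].
    f_equal; [eapply Hg | eapply IHgs]; eauto.
  - destruct xs as [| n xs]; [inversion H1 |].
    revert y1 y2 H1 H2. induction n as [|n IHn]; intros y1 y2 H1 H2;
      inversion H1; inversion H2; subst.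
    + eapply Hf; eauto.
    + assert (z = z0) by (eapply IHn; eauto). subst. eapply Hg; eauto.
  - inversion H1 as [| | | | | | ? ? ? Z1 L1]; subst.
    inversion H2 as [| | | | | | ? ? ? Z2 L2]; subst.
    destruct (Nat.lt_trichotomy y1 y2) as [L | [L | L]]; [exfalso | exact L | exfalso].
    + destruct (L2 y1 L) as [m [Hm Em]]. exact (Hm (Hf _ _ _ Em Z1)).
    + destruct (L1 y2 L) as [m [Hm Em]]. exact (Hm (Hf _ _ _ Em Z2)).
Qed.

Definition pair_code (a b : nat) : nat := to_nat (a, b).

Lemma pair_code_inj a b c d : pair_code a b = pair_code c d -> a = c /\ b = d.
Proof.
  unfold pair_code. intros H. apply (f_equal of_nat) in H. rewrite !cancel_of_to in H.
  injection H. auto.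
Qed.

Fixpoint rec_code (r : rec) : nat :=
  match r with
  | RZero => pair_code 0 0
  | RSucc => pair_code 1 0
  | RProj i => pair_code 2 i
  | RComp f gs =>
      pair_code 3 (pair_code (rec_code f)
        ((fix list_code (l : list rec) : nat :=
            match l with
            | nil => 0
            | g :: l' => S (pair_code (rec_code g) (list_code l'))
            end) gs))
  | RPrimRec f g => pair_code 4 (pair_code (rec_code f) (rec_code g))
  | RMu f => pair_code 5 (rec_code f)
  end.

Lemma rec_code_inj r1 r2 : rec_code r1 = rec_code r2 -> r1 = r2.
Proof.
  revert r2.
  induction r1 as [| | i | f gs Hf Hgs | f g Hf Hg | f Hf] using rec_ind_nested;
    intros [| | i' | f' gs' | f' g' | f'] E; simpl in E;
    repeat match goal with H : pair_code _ _ = pair_code _ _ |- _ =>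
             apply pair_code_inj in H as [? H] end;
    try discriminate; subst; f_equal; auto.
  revert gs' E. induction Hgs as [| g gs Hg _ IHgs]; intros [| g' gs'] E;
    try discriminate; [reflexivity |].
  injection E as E. apply pair_code_inj in E as [Eg Egs]. f_equal; auto.
Qed.

End Programs.

(** * Recursive rational-valued functions *)

Definition rat_programs := (rec * rec * rec)%type.

Definition rat_programs_code (w : rat_programs) : nat :=
  let '(ca, cb, cc) := w in pair_code (rec_code ca) (pair_code (rec_code cb) (rec_code cc)).

Lemma rat_programs_code_inj w1 w2 : rat_programs_code w1 = rat_programs_code w2 -> w1 = w2.
Proof.
  destruct w1 as [[a b] c], w2 as [[a' b'] c']; simpl. intros H.
  apply pair_code_inj in H as [Ha H]. apply pair_code_inj in H as [Hb Hc].
  apply rec_code_inj in Ha, Hb, Hc. subst. reflexivity.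
Qed.

Definition computes_rat {D : Type} (enc : D -> list nat) (w : rat_programs) (r : D -> R) : Prop :=
  let '(ca, cb, cc) := w in
  forall d, exists a b c : nat,
    eval ca (enc d) a /\ eval cb (enc d) b /\ eval cc (enc d) c /\
    r d = (INR a - INR b) / (INR c + 1).

Lemma rec_rat_computes_rat {D : Type} (enc : D -> list nat) r :
  rec_rat enc r <-> exists w, computes_rat enc w r.
Proof.
  split.
  - intros [ca [cb [cc H]]]. exists (ca, cb, cc). exact H.
  - intros [[[ca cb] cc] H]. exists ca, cb, cc. exact H.
Qed.

Lemma computes_rat_functional {D : Type} (enc : D -> list nat) w r1 r2 :
  computes_rat enc w r1 -> computes_rat enc w r2 -> r1 = r2.
Proof.
  destruct w as [[ca cb] cc]; simpl. intros H1 H2. apply functional_extensionality. intros d.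
  destruct (H1 d) as [a [b [c [Ha [Hb [Hc ->]]]]]].
  destruct (H2 d) as [a' [b' [c' [Ha' [Hb' [Hc' ->]]]]]].
  rewrite (eval_deterministic _ _ _ _ Ha Ha'), (eval_deterministic _ _ _ _ Hb Hb'),
    (eval_deterministic _ _ _ _ Hc Hc').
  reflexivity.
Qed.

(* For the bit [beta] the new programs output [beta a + (1 - beta)], [beta b] and
   [beta (K c + K - 1)]: for [beta = 1] the quotient is [(a - b) / (K (c + 1))], else [1]. *)
Lemma rec_rat_select {D : Type} (enc : D -> list nat) (f : D -> R) (bit : D -> bool)
    (bit_prog : rec) (K : nat) :
  rec_rat enc f -> (forall d, eval bit_prog (enc d) (if bit d then 1 else 0)%nat) -> (1 <= K)%nat ->
  rec_rat enc (fun d => if bit d then f d / INR K else 1).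
Proof.
  intros [ca [cb [cc Hf]]] Hbit HK.
  exists (padd (pmul bit_prog ca) (pmonus (pconst 1) bit_prog)),
         (pmul bit_prog cb),
         (pmul bit_prog (padd (pmul (pconst K) cc) (pconst (K - 1)))).
  intros d. destruct (Hf d) as [a [b [c [Ha [Hb [Hc Ef]]]]]].
  set (beta := if bit d then 1%nat else 0%nat).
  exists (beta * a + (1 - beta))%nat, (beta * b)%nat, (beta * (K * c + (K - 1)))%nat.
  split; [| split; [| split]].
  - apply eval_padd; [apply eval_pmul | apply eval_pmonus]; auto using eval_pconst.
  - apply eval_pmul; auto.
  - apply eval_pmul; [auto |].
    apply eval_padd; [apply eval_pmul |]; auto using eval_pconst.
  - subst beta. destruct (bit d); simpl.
    + rewrite !Nat.add_0_r, Ef, plus_INR, mult_INR, minus_INR by lia.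
      assert (1 <= INR K) by (apply (le_INR 1); exact HK).
      pose proof (pos_INR c). simpl. field. split; nra.
    + field.
Qed.

Lemma rec_rat_div_nat {D : Type} (enc : D -> list nat) (f : D -> R) (K : nat) :
  rec_rat enc f -> (1 <= K)%nat -> rec_rat enc (fun d => f d / INR K).
Proof.
  intros Hf HK. exact (rec_rat_select enc f (fun _ => true) (pconst 1) K Hf (fun d => eval_pconst 1 _) HK).
Qed.

Lemma rec_rat_ext {D : Type} (enc : D -> list nat) (f g : D -> R) :
  (forall d, f d = g d) -> rec_rat enc f -> rec_rat enc g.
Proof.
  intros E Hf. replace g with f by (apply functional_extensionality; exact E). exact Hf.
Qed.

(** * Situations *)

Section SituationCodes.
Local Open Scope nat_scope.

Lemma code_app s u : code (s ++ u) = code s + 2 ^ length s * code u.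
Proof. induction s as [|b s IH]; simpl; [lia |]. rewrite IH. destruct b; lia. Qed.

Lemma code_inj s t : code s = code t -> s = t.
Proof.
  revert t. induction s as [|b s IH]; intros [|c t]; simpl; intros H;
    try (destruct b; lia); try (destruct c; lia); [reflexivity |].
  destruct b, c; try lia; f_equal; apply IH; lia.
Qed.

Lemma code_surj m : exists u, code u = m.
Proof.
  induction m as [m IH] using (well_founded_induction lt_wf).
  destruct m as [|m]; [exists nil; reflexivity |].
  destruct (Nat.Even_or_Odd m) as [[k Hk] | [k Hk]];
    destruct (IH k ltac:(lia)) as [u Hu].
  - exists (false :: u). simpl. lia.
  - exists (true :: u). simpl. lia.
Qed.

(* [t] extends [s0] iff [code t - code s0] is a nonnegative multiple of [2 ^ length s0]. *)
Definition extendsb (s0 t : situation) : bool :=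
  divides_shiftb (code s0) (2 ^ length s0) (code t).

Lemma extendsb_spec s0 t : extendsb s0 t = true <-> exists u, t = s0 ++ u.
Proof.
  assert (HD : 2 ^ length s0 <> 0) by (apply Nat.pow_nonzero; lia).
  unfold extendsb, divides_shiftb. rewrite Bool.andb_true_iff, Nat.leb_le, Nat.eqb_eq. split.
  - intros [H1 H2]. apply Nat.Div0.mod_divides in H2 as [k Hk].
    destruct (code_surj k) as [u Hu]. exists u. apply code_inj. rewrite code_app. lia.
  - intros [u ->]. rewrite code_app. split; [lia |].
    replace (code s0 + 2 ^ length s0 * code u - code s0) with (code u * 2 ^ length s0) by lia.
    apply Nat.Div0.mod_mul.
Qed.

Definition extends_prog (s0 : situation) : rec := pdivides_shift (code s0) (2 ^ length s0).

Lemma eval_extends_prog s0 t xs : nth 0 xs 0 = code t ->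
  eval (extends_prog s0) xs (if extendsb s0 t then 1 else 0).
Proof.
  intros H. apply eval_pdivides_shift; [| exact H].
  pose proof (Nat.pow_nonzero 2 (length s0)). lia.
Qed.

End SituationCodes.

Lemma prefix_add omega N k : prefix omega (N + k) = prefix omega N ++ map omega (seq N k).
Proof. unfold prefix. rewrite seq_app, map_app. reflexivity. Qed.

Lemma length_prefix omega n : length (prefix omega n) = n.
Proof. unfold prefix. rewrite length_map, length_seq. reflexivity. Qed.

Lemma extendsb_prefix omega N n : (N <= n)%nat -> extendsb (prefix omega N) (prefix omega n) = true.
Proof.
  intros H. apply extendsb_spec. exists (map omega (seq N (n - N))).
  replace n with (N + (n - N))%nat at 1 by lia. apply prefix_add.
Qed.

Lemma extendsb_snoc s0 t x : extendsb s0 t = true -> extendsb s0 (t ++ [x]) = true.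
Proof. rewrite !extendsb_spec. intros [u ->]. exists (u ++ [x]). symmetry. apply app_assoc. Qed.

Lemma extendsb_length s0 t : extendsb s0 t = true -> (length s0 <= length t)%nat.
Proof. rewrite extendsb_spec. intros [u ->]. rewrite length_app. lia. Qed.

Lemma extendsb_nil s0 : s0 <> nil -> extendsb s0 nil = false.
Proof.
  intros Hs0. apply Bool.not_true_iff_false. rewrite extendsb_spec. intros [u Hu].
  destruct s0; [contradiction | discriminate].
Qed.

Lemma extendsb_snoc_entry s0 t x :
  extendsb s0 t = false -> extendsb s0 (t ++ [x]) = true -> t ++ [x] = s0.
Proof.
  intros Ht Htx. apply extendsb_spec in Htx as [u Hu].
  destruct u as [| y u _] using rev_ind; [rewrite app_nil_r in Hu; exact Hu |].
  rewrite app_assoc in Hu. apply app_inj_tail in Hu as [-> _].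
  assert (extendsb s0 (s0 ++ u) = true) by (apply extendsb_spec; exists u; reflexivity).
  congruence.
Qed.

(** * The diagonal forecasting system *)

Lemma Ex_interval (f : bool -> R) p q r :
  p <= r <= q -> Ex p f <= 0 -> Ex q f <= 0 -> Ex r f <= 0.
Proof.
  unfold Ex. intros [Hpr Hrq] Hp Hq.
  destruct (Rle_dec 0 (f true - f false)).
  - assert (r * (f true - f false) <= q * (f true - f false)) by (apply Rmult_le_compat_r; lra).
    lra.
  - assert (r * (f true - f false) <= p * (f true - f false)) by nra. lra.
Qed.

Lemma supermartingale_precise_of_stationary p q (phi : situation -> R) T :
  (forall s, p <= phi s <= q) ->
  supermartingale (stationary_fs p q) T -> supermartingale (precise_fs phi) T.
Proof. intros Hphi HT s r Hr. apply HT. simpl in *. specialize (Hphi s). lra. Qed.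

Section Diagonal.
Variables (p q : R) (family : nat -> process -> Prop).

Definition gains_at (T : process) (s : situation) (r : R) : Prop :=
  (r = p \/ r = q) /\ 0 < Ex r (Defs.Delta T s).

Definition no_gain_from (T : process) (N : nat) : Prop :=
  forall t r, (N <= length t)%nat -> ~ gains_at T t r.

Definition stage_candidate (i M : nat) (x : process * situation * R) : Prop :=
  let '(T, s, r) := x in family i T /\ (M <= length s)%nat /\ gains_at T s r.

Definition choose_target (i M : nat) : option (situation * R) :=
  match excluded_middle_informative (exists x, stage_candidate i M x) with
  | left H => let '(_, s, r) := proj1_sig (constructive_indefinite_description _ H) in Some (s, r)
  | right _ => None
  end.

Lemma choose_target_spec i M s r : choose_target i M = Some (s, r) ->
  exists T, family i T /\ (M <= length s)%nat /\ gains_at T s r.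
Proof.
  unfold choose_target. destruct (excluded_middle_informative _) as [H | H]; [| discriminate].
  destruct (constructive_indefinite_description _ H) as [[[T s'] r'] HT]; simpl.
  intros E. injection E as <- <-. exists T. exact HT.
Qed.

Lemma choose_target_exists i M x : stage_candidate i M x -> exists s r, choose_target i M = Some (s, r).
Proof.
  intros Hx. unfold choose_target.
  destruct (excluded_middle_informative _) as [H | H]; [| exfalso; exact (H (ex_intro _ x Hx))].
  destruct (proj1_sig _) as [[T s] r]. eauto.
Qed.

(* Stage [i] only looks at situations longer than every target of the earlier stages. *)
Fixpoint threshold (i : nat) : nat :=
  match i with
  | O => O
  | S i => match choose_target i (threshold i) with
           | Some (s, _) => S (length s)
           | None => threshold i
           end
  end.

Definition target (i : nat) : option (situation * R) := choose_target i (threshold i).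

Lemma threshold_le_succ i : (threshold i <= threshold (S i))%nat.
Proof.
  simpl. destruct (choose_target i (threshold i)) as [[s r] |] eqn:E; [| lia].
  apply choose_target_spec in E as (T & _ & HM & _). lia.
Qed.

Lemma threshold_mono i j : (i <= j)%nat -> (threshold i <= threshold j)%nat.
Proof. induction 1; [lia |]. pose proof (threshold_le_succ m). lia. Qed.

Lemma target_length i s r : target i = Some (s, r) ->
  (threshold i <= length s < threshold (S i))%nat.
Proof.
  unfold target. intros E. simpl. rewrite E.
  apply choose_target_spec in E as (T & _ & HM & _). lia.
Qed.

Lemma target_inj i j s r r' : target i = Some (s, r) -> target j = Some (s, r') -> i = j.
Proof.
  intros Ei Ej. apply target_length in Ei, Ej.
  destruct (Nat.lt_trichotomy i j) as [L | [L | L]]; [| exact L |];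
    [pose proof (threshold_mono (S i) j L) | pose proof (threshold_mono (S j) i L)]; lia.
Qed.

(* Off the targets the forecast is arbitrary; [p] is used. *)
Definition diagonal_forecast (s : situation) : R :=
  match excluded_middle_informative (exists ir : nat * R, target (fst ir) = Some (s, snd ir)) with
  | left H => snd (proj1_sig (constructive_indefinite_description _ H))
  | right _ => p
  end.

Lemma diagonal_forecast_target i s r : target i = Some (s, r) -> diagonal_forecast s = r.
Proof.
  intros E. unfold diagonal_forecast. destruct (excluded_middle_informative _) as [H | H].
  - destruct (constructive_indefinite_description _ H) as [[j r'] E']; simpl in *.
    rewrite <- (target_inj _ _ _ _ _ E E'), E in E'. congruence.
  - exfalso. apply H. exists (i, r). exact E.
Qed.

Lemma diagonal_forecast_range s : p <= q -> p <= diagonal_forecast s <= q.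
Proof.
  intros Hpq. unfold diagonal_forecast. destruct (excluded_middle_informative _) as [H | H]; [| lra].
  destruct (constructive_indefinite_description _ H) as [[j r] E]; simpl in *.
  apply choose_target_spec in E as (T & _ & _ & [[-> | ->] _]); lra.
Qed.

Hypothesis family_functional : forall i T1 T2, family i T1 -> family i T2 -> T1 = T2.

(* At stage [i] the forecast contradicted the one process of the family that gained beyond
   [threshold i]; a supermartingale for it therefore never gains that late. *)
Lemma diagonal_forecast_no_gain i T :
  family i T -> supermartingale (precise_fs diagonal_forecast) T -> no_gain_from T (threshold i).
Proof.
  intros HT Hsup t r Ht Hgain.
  destruct (choose_target_exists i (threshold i) (T, t, r)) as (s & r' & E); [exact (conj HT (conj Ht Hgain)) |].
  pose proof (diagonal_forecast_target _ _ _ E) as Hphi.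
  apply choose_target_spec in E as (T' & HT' & _ & [_ Hpos]).
  rewrite (family_functional _ _ _ HT' HT) in Hpos.
  specialize (Hsup s (diagonal_forecast s)). simpl in Hsup. rewrite Hphi in Hsup. lra.
Qed.

End Diagonal.

(** * Restarting a test process *)

Definition restart (s0 : situation) (c : R) (T : process) : process :=
  fun t => if extendsb s0 t then T t / c else 1.

Lemma restart_prefix omega N n c T : (N <= n)%nat ->
  restart (prefix omega N) c T (prefix omega n) = T (prefix omega n) / c.
Proof. intros H. unfold restart. rewrite extendsb_prefix by exact H. reflexivity. Qed.

Lemma restart_test_process s0 c T :
  s0 <> nil -> 0 < c -> (forall s, 0 <= T s) -> test_process (restart s0 c T).
Proof.
  intros Hs0 Hc HT. unfold restart. split.
  - intros s. destruct (extendsb s0 s); [| lra].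
    apply Rmult_le_pos; [apply HT | left; apply Rinv_0_lt_compat, Hc].
  - rewrite extendsb_nil by exact Hs0. reflexivity.
Qed.

(* Inside the cone of [s0] the increments are those of [T / c]; at the entry into the cone
   the process jumps from [1] down to [T s0 / c <= 1]; elsewhere it is constant. *)
Lemma restart_supermartingale p q s0 c T :
  0 <= p -> q <= 1 -> 0 < c -> T s0 <= c -> no_gain_from p q T (length s0) ->
  supermartingale (stationary_fs p q) (restart s0 c T).
Proof.
  intros Hp Hq Hc Hs0 Hgain s r Hr. simpl in Hr.
  assert (Hcinv : 0 < / c) by (apply Rinv_0_lt_compat, Hc).
  destruct (extendsb s0 s) eqn:E.
  - assert (HT : Ex r (Defs.Delta T s) <= 0).
    { pose proof (extendsb_length _ _ E) as Hlen.
      apply (Ex_interval _ p q r); [lra | |]; apply Rnot_lt_le; intros Hpos.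
      - exact (Hgain s p Hlen (conj (or_introl eq_refl) Hpos)).
      - exact (Hgain s q Hlen (conj (or_intror eq_refl) Hpos)). }
    unfold Ex, Defs.Delta, restart in *. rewrite E, !extendsb_snoc by exact E.
    replace (r * (T (s ++ [true]) / c - T s / c) + (1 - r) * (T (s ++ [false]) / c - T s / c))
      with ((r * (T (s ++ [true]) - T s) + (1 - r) * (T (s ++ [false]) - T s)) * / c)
      by (field; lra).
    nra.
  - assert (Hstep : forall x, Defs.Delta (restart s0 c T) s x <= 0).
    { intros x. unfold Defs.Delta, restart. rewrite E.
      destruct (extendsb s0 (s ++ [x])) eqn:Ex; [| lra].
      rewrite (extendsb_snoc_entry _ _ _ E Ex).
      enough (T s0 / c <= 1) by lra.
      apply (Rmult_le_reg_r c); [exact Hc |]. field_simplify; lra. }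
    unfold Ex. pose proof (Hstep true). pose proof (Hstep false). nra.
Qed.

Lemma max_prefix_bound (f : nat -> R) N : exists B, forall m, (m < N)%nat -> f m <= B.
Proof.
  induction N as [| N [B HB]]; [exists 0; intros; lia |].
  exists (Rmax B (f N)). intros m Hm. destruct (Nat.eq_dec m N) as [-> | Hne].
  - apply Rmax_r.
  - eapply Rle_trans; [apply HB; lia | apply Rmax_l].
Qed.

Lemma restart_limsup_infinite T omega N c : 0 < c -> limsup_infinite T omega ->
  limsup_infinite (restart (prefix omega N) c T) omega.
Proof.
  intros Hc HT B. destruct (max_prefix_bound (fun m => T (prefix omega m)) N) as [BN HBN].
  destruct (HT (Rmax (B * c) BN)) as [n Hn].
  assert (HnN : (N <= n)%nat).
  { destruct (Nat.lt_ge_cases n N) as [L | L]; [| exact L].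
    specialize (HBN n L). simpl in HBN. pose proof (Rmax_r (B * c) BN). lra. }
  exists n. rewrite restart_prefix by exact HnN.
  pose proof (Rmax_l (B * c) BN). apply (Rmult_lt_reg_r c); [exact Hc |]. field_simplify; lra.
Qed.

Lemma restart_limsup_ge0 T tau omega N c : 0 < c -> limsup_ge0 T tau omega ->
  limsup_ge0 (restart (prefix omega N) c T) (fun n => tau n / c) omega.
Proof.
  intros Hc HT eps Heps N1.
  destruct (HT (eps * c) ltac:(nra) (Nat.max N1 N)) as [n [Hn Hlt]].
  exists n. split; [lia |]. rewrite restart_prefix by lia.
  apply (Rmult_lt_reg_r c); [exact Hc |].
  replace ((T (prefix omega n) / c - tau n / c) * c) with (T (prefix omega n) - tau n)
    by (field; lra).
  lra.
Qed.

(** * The four classes of tests *)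

Lemma Un_cv_const (l : R) : Un_cv (fun _ => l) l.
Proof. intros eps Heps. exists 0%nat. intros n _. unfold R_dist. rewrite Rminus_diag, Rabs_R0. exact Heps. Qed.

Lemma Un_cv_div (u : nat -> R) l c : Un_cv u l -> Un_cv (fun n => u n / c) (l / c).
Proof. intros Hu. exact (CV_mult u (fun _ => / c) l (/ c) Hu (Un_cv_const _)). Qed.

Lemma exists_nat_ge (x : R) : exists K : nat, (1 <= K)%nat /\ x <= INR K.
Proof.
  destruct (INR_archimed 1 x) as [n Hn]; [lra |].
  exists (S n). split; [lia | rewrite S_INR; lra].
Qed.

Lemma prefix_succ_neq_nil omega N : prefix omega (S N) <> nil.
Proof. intros E. pose proof (length_prefix omega (S N)) as H. rewrite E in H. discriminate. Qed.

Lemma restart_F_C s0 K T : s0 <> nil -> (1 <= K)%nat -> F_C T -> F_C (restart s0 (INR K) T).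
Proof.
  intros Hs0 HK [[HT0 HT1] [Hpos Hrec]].
  assert (HKpos : 0 < INR K) by (apply lt_0_INR; lia).
  split; [| split].
  - apply restart_test_process; assumption.
  - intros s. unfold restart. destruct (extendsb s0 s); [apply Rdiv_lt_0_compat; auto | lra].
  - apply (rec_rat_select enc_sit T (extendsb s0) (extends_prog s0) K Hrec); [| exact HK].
    intros d. apply eval_extends_prog. reflexivity.
Qed.

Lemma restart_F_ML s0 K T : s0 <> nil -> (1 <= K)%nat -> F_ML T -> F_ML (restart s0 (INR K) T).
Proof.
  intros Hs0 HK [[HT0 HT1] [qf [Hrec [Hmono Hcv]]]].
  assert (HKpos : 0 < INR K) by (apply lt_0_INR; lia).
  split; [apply restart_test_process; assumption |].
  exists (fun s n => if extendsb s0 s then qf s n / INR K else 1). split; [| split].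
  - apply (rec_rat_select (enc_pair enc_sit) (fun sn => qf (fst sn) (snd sn))
             (fun sn => extendsb s0 (fst sn)) (extends_prog s0) K Hrec); [| exact HK].
    intros sn. apply eval_extends_prog. reflexivity.
  - intros s n. destruct (extendsb s0 s); [| lra].
    apply Rmult_le_compat_r; [left; apply Rinv_0_lt_compat, HKpos | apply Hmono].
  - intros s. unfold restart. destruct (extendsb s0 s); [apply Un_cv_div, Hcv | apply Un_cv_const].
Qed.

Lemma generated_by_zero_absorbing D T s u : generated_by D T -> T s = 0 -> T (s ++ u) = 0.
Proof.
  intros [_ HD] Hs. induction u as [| x u IH] using rev_ind; [rewrite app_nil_r; exact Hs |].
  rewrite app_assoc, HD, IH. ring.
Qed.

Lemma generated_by_unbounded_pos D T omega N :
  generated_by D T -> (forall s, 0 <= T s) -> limsup_infinite T omega -> 0 < T (prefix omega N).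
Proof.
  intros HD HT HL. destruct (Rle_lt_or_eq_dec 0 _ (HT (prefix omega N))) as [Hpos | Hzero]; [exact Hpos |].
  exfalso. destruct (max_prefix_bound (fun m => T (prefix omega m)) N) as [B HB].
  destruct (HL (Rmax B 0)) as [n Hn].
  destruct (Nat.lt_ge_cases n N) as [L | L].
  - specialize (HB n L). simpl in HB. pose proof (Rmax_l B 0). lra.
  - replace n with (N + (n - N))%nat in Hn by lia.
    rewrite prefix_add, (generated_by_zero_absorbing D T) in Hn by auto.
    pose proof (Rmax_r B 0). lra.
Qed.

(* Restarting at [T s0] rather than at an integer keeps the process a product of multipliers. *)
Lemma restart_F_wML s0 T : s0 <> nil -> 0 < T s0 -> F_wML T -> F_wML (restart s0 (T s0) T).
Proof.
  intros Hs0 Hpos [[HT0 HT1] [D [HD [[qf [Hrec [Hmono Hcv]]] [HD1 HDs]]]]].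
  split; [apply restart_test_process; assumption |].
  exists (fun s x => if extendsb s0 s then D s x else 1). split; [| split; [| split]].
  - intros s x. destruct (extendsb s0 s); [apply HD | lra].
  - exists (fun sx n => if extendsb s0 (fst sx) then qf sx n else 1). split; [| split].
    + apply (rec_rat_ext _ (fun sxn => if extendsb s0 (fst (fst sxn))
                                       then qf (fst sxn) (snd sxn) / INR 1 else 1)).
      { intros sxn. simpl. destruct (extendsb s0 (fst (fst sxn))); [field | reflexivity]. }
      apply (rec_rat_select (enc_pair enc_sitx) (fun sxn => qf (fst sxn) (snd sxn))
               (fun sxn => extendsb s0 (fst (fst sxn))) (extends_prog s0) 1 Hrec); [| lia].
      intros sxn. apply eval_extends_prog. reflexivity.
    + intros sx n. destruct (extendsb s0 (fst sx)); [apply Hmono | lra].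
    + intros sx. simpl. destruct (extendsb s0 (fst sx)); [apply Hcv | apply Un_cv_const].
  - unfold restart. rewrite extendsb_nil by exact Hs0. reflexivity.
  - intros s x. unfold restart. destruct (extendsb s0 s) eqn:E.
    + rewrite extendsb_snoc, HDs by exact E. field. lra.
    + destruct (extendsb s0 (s ++ [x])) eqn:Ex; [| ring].
      rewrite (extendsb_snoc_entry _ _ _ E Ex). field. lra.
Qed.

Lemma real_growth_function_div tau K :
  (1 <= K)%nat -> real_growth_function tau -> real_growth_function (fun n => tau n / INR K).
Proof.
  intros HK [[qt [Hrec Happrox]] [Hnonneg [Hmono Hunb]]].
  assert (HK1 : 1 <= INR K) by (apply (le_INR 1); exact HK).
  assert (HKinv : 0 < / INR K <= 1).
  { split; [apply Rinv_0_lt_compat; lra |]. rewrite <- Rinv_1. apply Rinv_le_contravar; lra. }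
  split; [| split; [| split]].
  - exists (fun n m => qt n m / INR K).
    split; [exact (rec_rat_div_nat (enc_pair enc_nat) (fun nm => qt (fst nm) (snd nm)) K Hrec HK) |].
    intros n m. specialize (Happrox n m).
    replace (tau n / INR K - qt n m / INR K) with ((tau n - qt n m) * / INR K) by (field; lra).
    rewrite Rabs_mult, (Rabs_pos_eq (/ INR K)) by lra.
    pose proof (Rabs_pos (tau n - qt n m)). nra.
  - intros n. apply Rmult_le_pos; [apply Hnonneg | lra].
  - intros n. apply Rmult_le_compat_r; [lra | apply Hmono].
  - intros B. destruct (Hunb (B * INR K)) as [n Hn]. exists n.
    apply (Rmult_lt_reg_r (INR K)); [lra |]. field_simplify; lra.
Qed.

Definition test_class (k : rkind) : process -> Prop :=
  match k with RK_ML => F_ML | RK_wML => F_wML | RK_C | RK_S => F_C end.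

Definition witness (k : rkind) (w : rat_programs) (T : process) : Prop :=
  match k with
  | RK_ML => exists qf : situation -> nat -> R,
      computes_rat (enc_pair enc_sit) w (fun sn => qf (fst sn) (snd sn)) /\
      forall s, Un_cv (qf s) (T s)
  | RK_wML => exists (D : situation -> bool -> R) (qf : situation * bool -> nat -> R),
      computes_rat (enc_pair enc_sitx) w (fun sxn => qf (fst sxn) (snd sxn)) /\
      (forall sx, Un_cv (qf sx) (D (fst sx) (snd sx))) /\ generated_by D T
  | RK_C | RK_S => computes_rat enc_sit w T
  end.

Lemma test_class_witness k T : test_class k T -> exists w, witness k w T.
Proof.
  destruct k; simpl.
  - intros [_ [qf [Hrec [_ Hcv]]]]. apply rec_rat_computes_rat in Hrec as [w Hw]. eauto.
  - intros [_ [D [_ [[qf [Hrec [_ Hcv]]] HD]]]]. apply rec_rat_computes_rat in Hrec as [w Hw].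
    exists w, D, qf. auto.
  - intros [_ [_ Hrec]]. apply rec_rat_computes_rat in Hrec. exact Hrec.
  - intros [_ [_ Hrec]]. apply rec_rat_computes_rat in Hrec. exact Hrec.
Qed.

Lemma generated_by_functional D T1 T2 : generated_by D T1 -> generated_by D T2 -> T1 = T2.
Proof.
  intros [H1 S1] [H2 S2]. apply functional_extensionality. intros s.
  induction s as [| x s IH] using rev_ind; [congruence |]. rewrite S1, S2, IH. reflexivity.
Qed.

Lemma witness_functional k w T1 T2 : witness k w T1 -> witness k w T2 -> T1 = T2.
Proof.
  destruct k; simpl; try apply computes_rat_functional.
  - intros [q1 [H1 C1]] [q2 [H2 C2]].
    pose proof (computes_rat_functional _ _ _ _ H1 H2) as E.
    apply functional_extensionality. intros s. apply (UL_sequence (q1 s)); [apply C1 |].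
    replace (q1 s) with (q2 s); [apply C2 |].
    apply functional_extensionality. intros n. exact (f_equal (fun f => f (s, n)) (eq_sym E)).
  - intros [D1 [q1 [H1 [C1 G1]]]] [D2 [q2 [H2 [C2 G2]]]].
    pose proof (computes_rat_functional _ _ _ _ H1 H2) as E.
    replace D2 with D1 in G2; [exact (generated_by_functional D1 T1 T2 G1 G2) |].
    apply functional_extensionality. intros s. apply functional_extensionality. intros x.
    apply (UL_sequence (q1 (s, x))); [apply (C1 (s, x)) |].
    replace (q1 (s, x)) with (q2 (s, x)); [apply (C2 (s, x)) |].
    apply functional_extensionality. intros n. exact (f_equal (fun f => f (s, x, n)) (eq_sym E)).
Qed.

Definition indexed_class (k : rkind) (i : nat) (T : process) : Prop :=
  exists w, rat_programs_code w = i /\ witness k w T.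

Lemma indexed_class_functional k i T1 T2 :
  indexed_class k i T1 -> indexed_class k i T2 -> T1 = T2.
Proof.
  intros [w1 [E1 H1]] [w2 [E2 H2]]. rewrite <- E2 in E1.
  apply rat_programs_code_inj in E1. subst w2. exact (witness_functional k w1 T1 T2 H1 H2).
Qed.

Lemma diagonal_forecast_test_class_no_gain k p q T :
  test_class k T -> supermartingale (precise_fs (diagonal_forecast p q (indexed_class k))) T ->
  exists N, no_gain_from p q T N.
Proof.
  intros HT Hsup. destruct (test_class_witness k T HT) as [w Hw].
  exists (threshold p q (indexed_class k) (rat_programs_code w)).
  apply (diagonal_forecast_no_gain p q (indexed_class k) (indexed_class_functional k)); [| exact Hsup].
  exists w. auto.
Qed.

Lemma no_gain_from_mono p q T N N' : (N <= N')%nat -> no_gain_from p q T N -> no_gain_from p q T N'.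
Proof. intros HN H t r Ht. apply H. lia. Qed.

Lemma restart_after_no_gain p q T omega N c :
  0 <= p -> q <= 1 -> 0 < c -> T (prefix omega (S N)) <= c -> no_gain_from p q T N ->
  supermartingale (stationary_fs p q) (restart (prefix omega (S N)) c T).
Proof.
  intros Hp Hq Hc HTc Hgain. apply restart_supermartingale; try assumption.
  rewrite length_prefix. exact (no_gain_from_mono p q T N (S N) (le_S _ _ (le_n N)) Hgain).
Qed.

Lemma stationary_test_ML p q T omega N :
  0 <= p -> q <= 1 -> F_ML T -> no_gain_from p q T N -> limsup_infinite T omega ->
  exists T', F_ML T' /\ supermartingale (stationary_fs p q) T' /\ limsup_infinite T' omega.
Proof.
  intros Hp Hq HT Hgain HL. destruct (exists_nat_ge (T (prefix omega (S N)))) as [K [HK HTK]].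
  assert (HKpos : 0 < INR K) by (apply lt_0_INR; lia).
  exists (restart (prefix omega (S N)) (INR K) T). split; [| split].
  - exact (restart_F_ML _ K T (prefix_succ_neq_nil omega N) HK HT).
  - exact (restart_after_no_gain p q T omega N (INR K) Hp Hq HKpos HTK Hgain).
  - exact (restart_limsup_infinite T omega (S N) (INR K) HKpos HL).
Qed.

Lemma stationary_test_wML p q T omega N :
  0 <= p -> q <= 1 -> F_wML T -> no_gain_from p q T N -> limsup_infinite T omega ->
  exists T', F_wML T' /\ supermartingale (stationary_fs p q) T' /\ limsup_infinite T' omega.
Proof.
  intros Hp Hq HT Hgain HL. set (s0 := prefix omega (S N)).
  assert (Hpos : 0 < T s0).
  { destruct HT as [[HT0 _] [D [_ [_ HD]]]]. exact (generated_by_unbounded_pos D T omega (S N) HD HT0 HL). }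
  exists (restart s0 (T s0) T). split; [| split].
  - exact (restart_F_wML s0 T (prefix_succ_neq_nil omega N) Hpos HT).
  - exact (restart_after_no_gain p q T omega N (T s0) Hp Hq Hpos (Rle_refl _) Hgain).
  - exact (restart_limsup_infinite T omega (S N) (T s0) Hpos HL).
Qed.

Lemma stationary_test_C p q T omega N :
  0 <= p -> q <= 1 -> F_C T -> no_gain_from p q T N -> limsup_infinite T omega ->
  exists T', F_C T' /\ supermartingale (stationary_fs p q) T' /\ limsup_infinite T' omega.
Proof.
  intros Hp Hq HT Hgain HL. destruct (exists_nat_ge (T (prefix omega (S N)))) as [K [HK HTK]].
  assert (HKpos : 0 < INR K) by (apply lt_0_INR; lia).
  exists (restart (prefix omega (S N)) (INR K) T). split; [| split].
  - exact (restart_F_C _ K T (prefix_succ_neq_nil omega N) HK HT).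
  - exact (restart_after_no_gain p q T omega N (INR K) Hp Hq HKpos HTK Hgain).
  - exact (restart_limsup_infinite T omega (S N) (INR K) HKpos HL).
Qed.

Lemma stationary_test_S p q T tau omega N :
  0 <= p -> q <= 1 -> F_C T -> no_gain_from p q T N ->
  real_growth_function tau -> limsup_ge0 T tau omega ->
  exists T' tau', F_C T' /\ supermartingale (stationary_fs p q) T' /\
    real_growth_function tau' /\ limsup_ge0 T' tau' omega.
Proof.
  intros Hp Hq HT Hgain Htau HL. destruct (exists_nat_ge (T (prefix omega (S N)))) as [K [HK HTK]].
  assert (HKpos : 0 < INR K) by (apply lt_0_INR; lia).
  exists (restart (prefix omega (S N)) (INR K) T), (fun n => tau n / INR K). split; [| split; [| split]].
  - exact (restart_F_C _ K T (prefix_succ_neq_nil omega N) HK HT).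
  - exact (restart_after_no_gain p q T omega N (INR K) Hp Hq HKpos HTK Hgain).
  - exact (real_growth_function_div tau K HK Htau).
  - exact (restart_limsup_ge0 T tau omega (S N) (INR K) HKpos HL).
Qed.

Theorem corollary12 (k : rkind) (p q : R) :
  0 <= p -> p < q -> q <= 1 ->
  exists phi : situation -> R,
    (forall s, p <= phi s <= q) /\
    (forall omega : nat -> bool,
        random k (precise_fs phi) omega <-> random k (stationary_fs p q) omega).
Proof.
  intros Hp Hpq Hq. exists (diagonal_forecast p q (indexed_class k)).
  assert (Hrange : forall s, p <= diagonal_forecast p q (indexed_class k) s <= q)
    by (intros s; apply diagonal_forecast_range; lra).
  split; [exact Hrange |]. intros omega.
  pose proof (fun T => supermartingale_precise_of_stationary p q _ T Hrange) as Hprecise.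
  pose proof (diagonal_forecast_test_class_no_gain k p q) as Hgain.
  destruct k; simpl in Hgain |- *; split; intros Hrand Hex; apply Hrand.
  - destruct Hex as (T & HT & Hsup & HL). exists T. auto.
  - destruct Hex as (T & HT & Hsup & HL). destruct (Hgain T HT Hsup) as [N HN].
    exact (stationary_test_ML p q T omega N Hp Hq HT HN HL).
  - destruct Hex as (T & HT & Hsup & HL). exists T. auto.
  - destruct Hex as (T & HT & Hsup & HL). destruct (Hgain T HT Hsup) as [N HN].
    exact (stationary_test_wML p q T omega N Hp Hq HT HN HL).
  - destruct Hex as (T & HT & Hsup & HL). exists T. auto.
  - destruct Hex as (T & HT & Hsup & HL). destruct (Hgain T HT Hsup) as [N HN].
    exact (stationary_test_C p q T omega N Hp Hq HT HN HL).
  - destruct Hex as (T & tau & HT & Hsup & Htau & HL). exists T, tau. auto.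
  - destruct Hex as (T & tau & HT & Hsup & Htau & HL). destruct (Hgain T HT Hsup) as [N HN].
    exact (stationary_test_S p q T tau omega N Hp Hq HT HN Htau HL).
Qed.
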